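(* Let $(\mathcal J^n)_{n\in\mathbb N}$ be a sequence of closed convex subsets of $\mathbb R^d$ with set limit $\mathcal J=\operatorname{Lim}_{n\to\infty}\mathcal J^n$, and let $Q$ be a $d\times d$ matrix such that $\ker(Q)\subseteq\mathcal J^n$ for all $n\in\mathbb N$ and $\ker(Q)\subseteq\mathcal J$. Then $Q\mathcal J=\operatorname{Lim}_{n\to\infty}Q\mathcal J^n$.
   Context: For subsets $\mathcal J^n\subseteq\mathbb R^d$: the upper limit is $\operatorname{Limsup}_n\mathcal J^n:=\{x\in\mathbb R^d:\liminf_{n\to\infty}\mathrm{dist}(x,\mathcal J^n)=0\}$ (the cluster points of sequences $x_n\in\mathcal J^n$), the lower limit is $\operatorname{Liminf}_n\mathcal J^n:=\{x:\lim_{n\to\infty}\mathrm{dist}(x,\mathcal J^n)=0\}$ (limits of sequences $x_n\in\mathcal J^n$), and $\mathcal J$ is the set limit, $\mathcal J=\operatorname{Lim}_n\mathcal J^n$, if $\mathcal J=\operatorname{Limsup}_n\mathcal J^n=\operatorname{Liminf}_n\mathcal J^n$. For a set $\mathcal S$, $Q\mathcal S:=\{Qs:s\in\mathcal S\}$. *)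

From HB Require Import structures.
From mathcomp Require Import all_boot all_order all_algebra.
From mathcomp Require Import all_classical all_reals all_analysis.
Set Implicit Arguments. Unset Strict Implicit. Unset Printing Implicit Defensive.
Import Order.TTheory GRing.Theory Num.Theory.
Import numFieldNormedType.Exports.
Local Open Scope classical_set_scope.
Local Open Scope ring_scope.

Definition enorm {R : realType} {d : nat} (v : 'cV[R]_d) : R :=
  Num.sqrt (\sum_(i < d) v i 0 ^+ 2).

(* x \in Limsup_n J n  <->  liminf_n dist(x, J n) = 0, written out:
   for every eps > 0, infinitely many n have a point of J n within eps of x. *)
Definition set_limsup {R : realType} {d : nat} (J : nat -> set 'cV[R]_d) : set 'cV[R]_d :=
  [set x | forall eps : R, 0 < eps -> forall N : nat, exists2 n : nat, (N <= n)%N &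
           exists2 y, J n y & enorm (x - y) < eps].

(* x \in Liminf_n J n  <->  lim_n dist(x, J n) = 0, written out:
   for every eps > 0, eventually J n has a point within eps of x. *)
Definition set_liminf {R : realType} {d : nat} (J : nat -> set 'cV[R]_d) : set 'cV[R]_d :=
  [set x | forall eps : R, 0 < eps -> exists N : nat, forall n : nat, (N <= n)%N ->
           exists2 y, J n y & enorm (x - y) < eps].

Definition is_set_limit {R : realType} {d : nat} (J : nat -> set 'cV[R]_d) (L : set 'cV[R]_d) : Prop :=
  L = set_limsup J /\ L = set_liminf J.

Definition mx_image {R : realType} {d : nat} (Q : 'M[R]_d) (S : set 'cV[R]_d) : set 'cV[R]_d :=
  (fun s => Q *m s) @` S.

Definition mx_kernel {R : realType} {d : nat} (Q : 'M[R]_d) : set 'cV[R]_d :=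
  [set x | Q *m x = 0].

Definition convex_subset {R : realType} {d : nat} (S : set 'cV[R]_d) : Prop :=
  @convex_set R 'cV[R]_d S.

From HB Require Import structures.
From mathcomp Require Import all_boot all_order all_algebra.
From mathcomp Require Import all_classical all_reals all_analysis.
From mathcomp Require Import lra.
Import Order.TTheory GRing.Theory Num.Theory.
Import numFieldNormedType.Exports.
Local Open Scope classical_set_scope.
Local Open Scope ring_scope.

(* Since [ker Q] lies in every closed convex [J n], each [J n] is invariant under
   translation by [ker Q]; hence [pinvmx Q * Q], which moves a point only along
   [ker Q], maps [J n] into itself. As [Q] and [pinvmx Q] are Lipschitz, points of
   [Q J n] approximating [z] pull back to points of [J n] approximating
   [pinvmx Q z], which therefore lies in [Limsup J n = J]; and [z] lies in the
   (closed) column space of [Q], so [z = Q (pinvmx Q z)] lies in [Q J]. The other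
   inclusions are the Lipschitz continuity of [Q] and [Liminf <= Limsup]. *)

(* [c + k] is the limit of the convex combinations [t (k / t) + (1 - t) c], [t -> 0]. *)
Lemma closed_convex_add_ray (R : realType) (V : normedModType R) (C : set V) (c k : V) :
  closed C -> @convex_set R V C -> (forall r : R, 0 <= r -> C (r *: k)) ->
  C c -> C (c + k).
Proof.
move=> clC cvxC rayC Cc.
pose t (n : nat) : R := n.+1%:R^-1.
have t_gt0 n : 0 < t n by rewrite invr_gt0 ltr0n.
have t_le1 n : t n <= 1 by rewrite invf_le1 ?ltr0n // ler1n.
apply: (@closed_cvg _ _ \oo _ (fun n => k + (1 - t n) *: c) C clC).
  apply: nearW => n.
  have := cvxC ((t n)^-1 *: k) c (Itv01 (ltW (t_gt0 n)) (t_le1 n)).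
  rewrite !inE => /(_ (rayC _ _) Cc).
  have -> : k + (1 - t n) *: c = t n *: ((t n)^-1 *: k) + (1 - t n) *: c.
    by rewrite scalerA divff ?gt_eqF // scale1r.
  by apply; rewrite invr_ge0 ltW.
rewrite [c + k]addrC; apply: cvgD; first exact: cvg_cst.
rewrite -[X in _ --> X]scale1r; apply: cvgZ; last exact: cvg_cst.
rewrite -[X in _ --> X]subr0; apply: cvgB; first exact: cvg_cst.
exact: cvg_harmonic.
Qed.

Section EuclideanNorm.
Context {R : realType} {d : nat}.
Implicit Types (v : 'cV[R]_d) (M : 'M[R]_d).

Lemma enorm_coord v i : `|v i 0| <= enorm v.
Proof.
rewrite /enorm -sqrtr_sqr ler_wsqrtr // (bigD1 i) //= lerDl.
by apply: sumr_ge0 => j _; apply: sqr_ge0.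
Qed.

Lemma enorm_le_sum_coord v : enorm v <= \sum_(i < d) `|v i 0|.
Proof.
have sum_ge0 : 0 <= \sum_(i < d) `|v i 0| by apply: sumr_ge0.
rewrite /enorm -[X in _ <= X]ger0_norm // -sqrtr_sqr ler_wsqrtr //.
rewrite expr2 mulr_sumr; apply: ler_sum => i _.
rewrite -real_normK ?num_real // expr2 mulrC ler_wpM2r //.
by rewrite (bigD1 i) //= lerDl; apply: sumr_ge0.
Qed.

Lemma enorm_mulmx_le M v :
  enorm (M *m v) <= (\sum_(i < d) \sum_(j < d) `|M i j|) * enorm v.
Proof.
apply: (le_trans (enorm_le_sum_coord _)); rewrite mulr_suml.
apply: ler_sum => i _; rewrite mxE mulr_suml.
apply: (le_trans (ler_norm_sum _ _ _)); apply: ler_sum => j _.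
by rewrite normrM ler_wpM2l // enorm_coord.
Qed.

Lemma enorm_mulmx_small M eps : 0 < eps ->
  exists2 delta, 0 < delta & forall v, enorm v < delta -> enorm (M *m v) < eps.
Proof.
move=> eps_gt0; set c := \sum_(i < d) \sum_(j < d) `|M i j|.
have c_ge0 : 0 <= c by do 2 apply: sumr_ge0 => ? _.
exists (eps / (c + 1)) => [|v v_small]; first by rewrite divr_gt0 // ltr_wpDl.
apply: (le_lt_trans (enorm_mulmx_le M v)).
apply: (le_lt_trans (ler_wpM2l c_ge0 (ltW v_small))).
by rewrite mulrA ltr_pdivrMr ?ltr_wpDl //; nra.
Qed.

Lemma enorm_small_eq0 v : (forall eps, 0 < eps -> enorm v < eps) -> v = 0.
Proof.
move=> v_small; apply/matrixP => i j; rewrite (ord1 j) mxE.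
apply/normr0_eq0/le_anti; rewrite normr_ge0 andbT.
rewrite leNgt; apply/negP => /v_small; apply/negP; rewrite -leNgt.
exact: enorm_coord.
Qed.

End EuclideanNorm.

Section SetLimits.
Context {R : realType} {d : nat}.
Implicit Types (M Q : 'M[R]_d).

Lemma set_liminf_sub_limsup (J : nat -> set 'cV[R]_d) : set_liminf J `<=` set_limsup J.
Proof.
move=> x x_liminf eps eps_gt0 N; have [N0 near] := x_liminf eps eps_gt0.
by exists (maxn N N0); [rewrite leq_maxl | apply: near; rewrite leq_maxr].
Qed.

Lemma mx_image_liminf M (J J' : nat -> set 'cV[R]_d) :
  (forall n, mx_image M (J n) `<=` J' n) ->
  mx_image M (set_liminf J) `<=` set_liminf J'.
Proof.
move=> MJ _ [x x_liminf <-] eps /(enorm_mulmx_small M) [delta delta_gt0 small].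
have [N near] := x_liminf delta delta_gt0; exists N => n /near [y Jy xy].
by exists (M *m y); [apply: MJ; exists y | rewrite -mulmxBr small].
Qed.

Lemma mx_image_limsup M (J J' : nat -> set 'cV[R]_d) :
  (forall n, mx_image M (J n) `<=` J' n) ->
  mx_image M (set_limsup J) `<=` set_limsup J'.
Proof.
move=> MJ _ [x x_limsup <-] eps /(enorm_mulmx_small M) [delta delta_gt0 small] N.
have [n Nn [y Jy xy]] := x_limsup delta delta_gt0 N; exists n => //.
by exists (M *m y); [apply: MJ; exists y | rewrite -mulmxBr small].
Qed.

Lemma mulmx_pinvmxK Q : Q *m pinvmx Q *m Q = Q.
Proof. exact/mulmxKpV/submx_refl. Qed.

(* The column space of [Q] is closed: it is the kernel of the continuous map
   [1 - Q * pinvmx Q]. *)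
Lemma pinvmx_approx_image Q z :
  (forall eps, 0 < eps -> exists y, enorm (z - Q *m y) < eps) ->
  Q *m (pinvmx Q *m z) = z.
Proof.
move=> z_approx; apply/eqP; rewrite eq_sym -subr_eq0; apply/eqP.
pose E := 1%:M - Q *m pinvmx Q.
have E_image y : E *m (z - Q *m y) = z - Q *m (pinvmx Q *m z).
  rewrite mulmxBr !mulmxBl !mul1mx [Q *m pinvmx Q *m (Q *m y)]mulmxA.
  by rewrite mulmx_pinvmxK subrr subr0 -mulmxA.
apply: enorm_small_eq0 => eps /(enorm_mulmx_small E) [delta delta_gt0 small].
by have [y zy] := z_approx delta delta_gt0; rewrite -(E_image y) small.
Qed.

Lemma pinvmx_image_sub Q (C : set 'cV[R]_d) :
  closed C -> convex_subset C -> mx_kernel Q `<=` C ->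
  mx_image (pinvmx Q) (mx_image Q C) `<=` C.
Proof.
move=> clC cvxC kerC _ [_ [y Cy <-] <-].
have -> : pinvmx Q *m (Q *m y) = y + (pinvmx Q *m (Q *m y) - y).
  by rewrite addrC subrK.
apply: closed_convex_add_ray => // r _; apply: kerC.
rewrite /mx_kernel /= -scalemxAr mulmxBr [Q *m (pinvmx Q *m _)]mulmxA.
by rewrite [Q *m pinvmx Q *m _]mulmxA mulmx_pinvmxK subrr scaler0.
Qed.

End SetLimits.

Theorem propositionC3 (R : realType) (d : nat) (J : nat -> set 'cV[R]_d)
  (L : set 'cV[R]_d) (Q : 'M[R]_d) :
  (forall n, closed (J n)) ->
  (forall n, convex_subset (J n)) ->
  is_set_limit J L ->
  (forall n, mx_kernel Q `<=` J n) ->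
  mx_kernel Q `<=` L ->
  is_set_limit (fun n => mx_image Q (J n)) (mx_image Q L).
Proof.
(* [ker Q <= L] is redundant: it follows from [ker Q <= J n] and [L = Liminf J n]. *)
move=> clJ cvxJ [L_limsup L_liminf] kerJ _.
set QJ := fun n => mx_image Q (J n).
have QL_liminf : mx_image Q L `<=` set_liminf QJ.
  by rewrite L_liminf; apply: mx_image_liminf => n.
have limsup_QL : set_limsup QJ `<=` mx_image Q L.
  move=> z z_limsup; exists (pinvmx Q *m z).
    rewrite L_limsup; apply: (@mx_image_limsup _ _ _ QJ); last by exists z.
    by move=> n; apply: pinvmx_image_sub.
  apply: pinvmx_approx_image => eps /z_limsup /(_ 0%N) [n _ [_ [y _ <-] zy]].
  by exists y.
split; apply/seteqP; split => //.
- by move=> z /QL_liminf /set_liminf_sub_limsup.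
- by move=> z /set_liminf_sub_limsup /limsup_QL.
Qed.
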